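(* Let $\kappa$ be a regular cardinal and let $\mathcal{T}$ be a countable complete first-order theory in a countable relational vocabulary $L$. Let $\eta\in\kappa^\kappa$ be such that $M_\eta\models\mathcal{T}$, and suppose that for every $\alpha<\kappa^+$ there is $\xi\in\kappa^\kappa$ such that $M_\xi\models\mathcal{T}$, $M_\xi\not\cong M_\eta$ and $M_\xi\equiv^\alpha_{\kappa^+\kappa}M_\eta$. Then $\mathrm{Orb}(M_\eta)=\{\zeta\in\kappa^\kappa\mid M_\zeta\cong M_\eta\}$ is not $\kappa$-Borel.
   Context: Coding of structures: $L=\{Q_m\mid m<\omega\}$ is a countable relational vocabulary and $\pi:\kappa^{<\omega}\to\kappa$ is a fixed bijection. For $\eta\in\kappa^\kappa$, $M_\eta$ is the $L$-structure with domain $\kappa$ in which, for $(a_1,\dots,a_n)\in\kappa^n$, $(a_1,\dots,a_n)\in Q_m^{M_\eta}$ iff $Q_m$ has arity $n$ and $\eta(\pi(m,a_1,\dots,a_n))>0$. $M\equiv^\alpha_{\kappa^+\kappa}N$ means $M$ and $N$ satisfy the same $L_{\kappa^+\kappa}$-sentences of quantifier rank at most $\alpha$. Topology: for $X\subseteq\kappa$ with $|X|<\kappa$ and $\eta:X\to\kappa$, let $N_\eta=\{\zeta\in\kappa^\kappa\mid \eta\subseteq\zeta\}$; these sets together with $\emptyset$ are the basic $\kappa$-open sets. The $\kappa$-Borel subsets of $\kappa^\kappa$ form the smallest class containing the basic $\kappa$-open sets and closed under complements, unions of at most $\kappa$ sets and intersections of at most $\kappa$ sets. *)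

From Stdlib Require Import List Arith.
Import ListNotations.

(* |X| < |K| : there is no injection of K into X. *)
Definition card_lt {K : Type} (X : K -> Prop) : Prop :=
  ~ exists f : K -> K, (forall x y, f x = f y -> x = y) /\ (forall k, X (f k)).

Definition regular_cardinal (K : Type) (lt : K -> K -> Prop) : Prop :=
  (forall x, ~ lt x x) /\
  (forall x y z, lt x y -> lt y z -> lt x z) /\
  (forall x y, lt x y \/ x = y \/ lt y x) /\
  well_founded lt /\
  (exists f : nat -> K, forall i j, f i = f j -> i = j) /\
  (* an initial ordinal (cardinal): every proper initial segment is smaller *)
  (forall x, card_lt (fun y => lt y x)) /\
  (* regular: every subset of size < kappa is bounded *)
  (forall X : K -> Prop, card_lt X -> exists b, forall x, X x -> lt x b).

Definition is_zero {K : Type} (lt : K -> K -> Prop) (z : K) : Prop :=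
  forall y, ~ lt y z.

(* k is the finite ordinal m, seen as an element of kappa *)
Definition is_nth {K : Type} (lt : K -> K -> Prop) (m : nat) (k : K) : Prop :=
  exists f : nat -> K,
    (forall i j, i < m -> j < m -> f i = f j -> i = j) /\
    (forall y, lt y k <-> exists i, i < m /\ f i = y).

(* ---------- L-structures, L = {Q_m | m < omega} with arity ar m ---------- *)

Record Lstr := { dom : Type; rel : nat -> list dom -> Prop }.

(* M_eta : domain kappa, (a_1..a_n) in Q_m iff ar m = n and
   eta(pi(m, a_1, ..., a_n)) > 0 *)
Definition M_code {K : Type} (lt : K -> K -> Prop) (ar : nat -> nat)
  (pi : list K -> K) (eta : K -> K) : Lstr :=
  {| dom := K;
     rel := fun m s => length s = ar m /\
              exists k, is_nth lt m k /\ ~ is_zero lt (eta (pi (k :: s))) |}.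

Definition iso (ar : nat -> nat) (M N : Lstr) : Prop :=
  exists h : dom M -> dom N,
    (exists g : dom N -> dom M, (forall x, g (h x) = x) /\ (forall y, h (g y) = y)) /\
    (forall m (s : list (dom M)), length s = ar m ->
        (rel M m s <-> rel N m (map h s))).

Inductive fo : Type :=
| FRel (m : nat) (vs : list nat)
| FEq (i j : nat)
| FNeg (p : fo)
| FAnd (p q : fo)
| FEx (i : nat) (p : fo).

Fixpoint fo_sat (ar : nat -> nat) (M : Lstr) (s : nat -> dom M) (p : fo) : Prop :=
  match p with
  | FRel m vs => length vs = ar m /\ rel M m (map s vs)
  | FEq i j => s i = s j
  | FNeg q => ~ fo_sat ar M s q
  | FAnd q r => fo_sat ar M s q /\ fo_sat ar M s r
  | FEx i q => exists d, fo_sat ar M (fun j => if Nat.eqb j i then d else s j) q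
  end.

Fixpoint fo_free (p : fo) (x : nat) : Prop :=
  match p with
  | FRel _ vs => In x vs
  | FEq i j => x = i \/ x = j
  | FNeg q => fo_free q x
  | FAnd q r => fo_free q x \/ fo_free r x
  | FEx i q => x <> i /\ fo_free q x
  end.

Definition fo_sentence (p : fo) : Prop := forall x, ~ fo_free p x.

Definition fo_models (ar : nat -> nat) (M : Lstr) (T : fo -> Prop) : Prop :=
  forall p, T p -> forall s, fo_sat ar M s p.

(* complete (consistent) theory, semantically: it has a model and decides
   every sentence. *)
Definition complete_theory (ar : nat -> nat) (T : fo -> Prop) : Prop :=
  (forall p, T p -> fo_sentence p) /\
  (exists M : Lstr, inhabited (dom M) /\ fo_models ar M T) /\
  (forall p, fo_sentence p ->
     (forall M : Lstr, inhabited (dom M) -> fo_models ar M T ->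
        forall s, fo_sat ar M s p) \/
     (forall M : Lstr, inhabited (dom M) -> fo_models ar M T ->
        forall s, fo_sat ar M s (FNeg p))).

(* ---------- L_{kappa^+ kappa}, variables indexed by kappa ---------- *)

Inductive iform (K : Type) : Type :=
| IRel (m : nat) (vs : list K)
| IEq (x y : K)
| INeg (p : iform K)
| IAnd (A : K -> Prop) (F : K -> iform K)
| IEx (X : K -> Prop) (p : iform K).
Arguments IRel {K}. Arguments IEq {K}. Arguments INeg {K}.
Arguments IAnd {K}. Arguments IEx {K}.

Fixpoint isat {K : Type} (ar : nat -> nat) (M : Lstr) (s : K -> dom M)
  (p : iform K) : Prop :=
  match p with
  | IRel m vs => length vs = ar m /\ rel M m (map s vs)
  | IEq x y => s x = s y
  | INeg q => ~ isat ar M s q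
  | IAnd A F => forall k, A k -> isat ar M s (F k)
  | IEx X q => exists s' : K -> dom M,
      (forall x, ~ X x -> s' x = s x) /\ isat ar M s' q
  end.

(* well-formed: quantifier blocks have fewer than kappa variables
   (conjunctions are indexed by subsets of kappa, so have size <= kappa) *)
Fixpoint iwf {K : Type} (p : iform K) : Prop :=
  match p with
  | IRel _ _ | IEq _ _ => True
  | INeg q => iwf q
  | IAnd A F => forall k, A k -> iwf (F k)
  | IEx X q => card_lt X /\ iwf q
  end.

Fixpoint ifree {K : Type} (p : iform K) (x : K) : Prop :=
  match p with
  | IRel _ vs => In x vs
  | IEq a b => x = a \/ x = b
  | INeg q => ifree q x
  | IAnd A F => exists k, A k /\ ifree (F k) x
  | IEx X q => ~ X x /\ ifree q x
  end.

Definition isentence {K : Type} (p : iform K) : Prop :=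
  iwf p /\ forall x, ~ ifree p x.

(* Ordinals < kappa^+ as Brouwer trees with kappa-indexed suprema
   (these denote exactly the ordinals < kappa^+). *)
Inductive ord (K : Type) : Type :=
| O0
| OS (a : ord K)
| Olim (f : K -> ord K).
Arguments O0 {K}. Arguments OS {K}. Arguments Olim {K}.

Fixpoint ole {K : Type} (b a : ord K) : Prop :=
  match b with
  | O0 => True
  | OS b' =>
      (fix olt_b' (a : ord K) : Prop :=
         match a with
         | O0 => False
         | OS a' => ole b' a'
         | Olim g => exists k, olt_b' (g k)
         end) a
  | Olim f => forall k, ole (f k) a
  end.

Definition olt {K : Type} (b a : ord K) : Prop := ole (OS b) a.

Fixpoint rk_le {K : Type} (p : iform K) (a : ord K) : Prop :=
  match p with
  | IRel _ _ | IEq _ _ => True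
  | INeg q => rk_le q a
  | IAnd A F => forall k, A k -> rk_le (F k) a
  | IEx X q => exists b, olt b a /\ rk_le q b
  end.

Definition equiv_rank {K : Type} (ar : nat -> nat) (a : ord K) (M N : Lstr) : Prop :=
  forall p : iform K, isentence p -> rk_le p a ->
    ((forall s : K -> dom M, isat ar M s p) <-> (forall s : K -> dom N, isat ar N s p)).

Inductive kBorel {K : Type} : ((K -> K) -> Prop) -> Prop :=
| kB_empty : kBorel (fun _ => False)
| kB_basic (X : K -> Prop) (e : K -> K) :
    card_lt X -> kBorel (fun z => forall x, X x -> z x = e x)
| kB_compl (S : (K -> K) -> Prop) :
    kBorel S -> kBorel (fun z => ~ S z)
| kB_union (F : K -> (K -> K) -> Prop) :
    (forall k, kBorel (F k)) -> kBorel (fun z => exists k, F k z)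
| kB_inter (F : K -> (K -> K) -> Prop) :
    (forall k, kBorel (F k)) -> kBorel (fun z => forall k, F k z)
| kB_ext (S T : (K -> K) -> Prop) :
    kBorel S -> (forall z, S z <-> T z) -> kBorel T.

From Stdlib Require Import List Lia Classical ClassicalEpsilon FunctionalExtensionality FinFun.
Import ListNotations.

(* A kappa-Borel set S of codes is analysed through its Vaught transforms.  Conditions are
   injective maps from initial segments b of kappa into kappa; a generic bijection g meets
   kappa many dense sets of conditions, and exists because kappa is regular.  By induction on
   S we find formulas phi_b, with free variables below b and rank bounded by one ordinal
   below kappa^+, persistent under extension of conditions, such that for generic g the
   pulled-back copy g.x of M_x lies in S iff M_x |= phi_b[g] for some b: unions become
   disjunctions, complements become "no extension satisfies phi".  If S is closed under
   isomorphism, this makes S(x) equivalent to M_x |= \/_b exists injective (v_i)_(i<b) phi_b,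
   a sentence of bounded rank; for the orbit of M_eta this sentence would transfer from
   M_eta to an elementarily close M_xi and make it isomorphic to M_eta. *)

Lemma ole_OS {K} (b a : ord K) :
  ole (OS b) a <->
  match a with O0 => False | OS a' => ole b a' | Olim g => exists k, ole (OS b) (g k) end.
Proof. destruct a; simpl; tauto. Qed.

Lemma ole_Olim {K} (x : ord K) (f : K -> ord K) k : ole x (f k) -> ole x (Olim f).
Proof.
  revert f k. induction x as [|b IH|h IH]; intros f k H.
  - exact I.
  - apply ole_OS. exists k. exact H.
  - intros j. apply (IH j f k), H.
Qed.

Lemma ole_refl {K} (x : ord K) : ole x x.
Proof.
  induction x as [|b IH|h IH].
  - exact I.
  - apply ole_OS, IH.
  - intros k. apply ole_Olim with k, IH.
Qed.

Lemma olt_OS {K} (a : ord K) : olt a (OS a).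
Proof. apply ole_OS, ole_refl. Qed.

Lemma ole_trans {K} (x y z : ord K) : ole x y -> ole y z -> ole x z.
Proof.
  revert y z. induction x as [|b IHb|f IHf]; intros y z Hxy Hyz.
  - exact I.
  - revert z Hxy Hyz. induction y as [|a _|g IHg]; intros z Hxy Hyz.
    + destruct (proj1 (ole_OS _ _) Hxy).
    + apply ole_OS in Hxy. apply ole_OS in Hyz.
      induction z as [|c _|h IHh].
      * destruct Hyz.
      * apply ole_OS. exact (IHb _ _ Hxy Hyz).
      * destruct Hyz as [k Hk]. apply ole_OS. exists k. apply IHh, ole_OS, Hk.
    + apply ole_OS in Hxy as [k Hk]. exact (IHg k z Hk (Hyz k)).
  - intros k. exact (IHf k y z (Hxy k) Hyz).
Qed.

Lemma rk_le_ole {K} (p : iform K) (a b : ord K) : rk_le p a -> ole a b -> rk_le p b.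
Proof.
  revert a b. induction p as [m vs|x y|q IH|A F IH|X q IH]; intros a b Hp Hab; simpl in *.
  - exact I.
  - exact I.
  - exact (IH a b Hp Hab).
  - intros k Hk. exact (IH k a b (Hp k Hk) Hab).
  - destruct Hp as [c [Hc Hq]]. exists c. split; [exact (ole_trans _ _ _ Hc Hab) | exact Hq].
Qed.

Lemma isat_agree {K} ar (M : Lstr) (p : iform K) (s s' : K -> dom M) :
  (forall v, ifree p v -> s v = s' v) -> isat ar M s p -> isat ar M s' p.
Proof.
  revert s s'. induction p as [m vs|x y|q IH|A F IH|X q IH]; intros s s' E; simpl in *.
  - intros [Hl Hr]. split; [exact Hl|]. erewrite map_ext_in; [exact Hr|].
    intros v Hv. symmetry. exact (E v Hv).
  - rewrite (E x (or_introl eq_refl)), (E y (or_intror eq_refl)). auto.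
  - intros Hn Hs. apply Hn. apply (IH s' s); [|exact Hs]. intros v Hv. symmetry. exact (E v Hv).
  - intros H k Hk. apply (IH k s s'); [|exact (H k Hk)]. intros v Hv. apply E. eauto.
  - intros [t [Ht Hq]].
    exists (fun v => if excluded_middle_informative (X v) then t v else s' v). split.
    + intros v Hv. destruct (excluded_middle_informative (X v)); tauto.
    + apply (IH t); [|exact Hq]. intros v Hv.
      destruct (excluded_middle_informative (X v)) as [_|Hx]; [reflexivity|].
      rewrite (Ht v Hx). apply E. auto.
Qed.

Definition IFalse {K} : iform K := INeg (IAnd (fun _ => False) (fun k => IEq k k)).

Lemma sat_IFalse {K} ar (M : Lstr) (s : K -> dom M) : ~ isat ar M s IFalse.
Proof. simpl. intro H. apply H. intros _ []. Qed.

Lemma free_IFalse {K} (v : K) : ~ ifree IFalse v.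
Proof. simpl. intros [k [[] _]]. Qed.

Definition IOr {K} (A : K -> Prop) (F : K -> iform K) : iform K :=
  INeg (IAnd A (fun k => INeg (F k))).

Lemma sat_IOr {K} ar (M : Lstr) (s : K -> dom M) (A : K -> Prop) F :
  isat ar M s (IOr A F) <-> exists k, A k /\ isat ar M s (F k).
Proof.
  simpl. split.
  - intro H. apply NNPP. intro Hn. apply H. intros k Hk Hs. apply Hn. eauto.
  - intros [k [Hk Hs]] H. exact (H k Hk Hs).
Qed.

Lemma iso_refl ar (N : Lstr) : iso ar N N.
Proof. exists (fun v => v). split; [exists (fun v => v); auto|]. intros m s _. rewrite map_id. tauto. Qed.

Lemma iso_sym ar (N N' : Lstr) : iso ar N N' -> iso ar N' N.
Proof.
  intros [h [[h' [Hh'h Hhh']] Hrel]]. exists h'. split; [exists h; auto|].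
  intros m s Hs. assert (E : map h (map h' s) = s).
  { rewrite map_map. erewrite map_ext; [apply map_id | exact Hhh']. }
  rewrite (Hrel m (map h' s)), E; [tauto|]. rewrite length_map. exact Hs.
Qed.

Lemma iso_trans ar (N N' N'' : Lstr) : iso ar N N' -> iso ar N' N'' -> iso ar N N''.
Proof.
  intros [h [[h' [H1 H2]] Hrel]] [k [[k' [K1 K2]] Krel]].
  exists (fun v => k (h v)). split.
  - exists (fun v => h' (k' v)). split; intros v; [rewrite K1, H1 | rewrite H2, K2]; reflexivity.
  - intros m s Hs. rewrite (Hrel m s Hs), (Krel m (map h s)), map_map; [tauto|].
    rewrite length_map. exact Hs.
Qed.

Section Kappa.

Variables (K : Type) (lt : K -> K -> Prop).
Hypothesis kappa_regular : regular_cardinal K lt.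
Variable pi : list K -> K.
Hypothesis pi_bijective : (forall u v, pi u = pi v -> u = v) /\ (forall k, exists u, pi u = k).

Lemma lt_irrefl x : ~ lt x x.
Proof. exact (proj1 kappa_regular x). Qed.

Lemma lt_trans x y z : lt x y -> lt y z -> lt x z.
Proof. exact (proj1 (proj2 kappa_regular) x y z). Qed.

Lemma lt_total x y : lt x y \/ x = y \/ lt y x.
Proof. exact (proj1 (proj2 (proj2 kappa_regular)) x y). Qed.

Lemma lt_wf : well_founded lt.
Proof. exact (proj1 (proj2 (proj2 (proj2 kappa_regular)))). Qed.

Lemma K_infinite : exists f : nat -> K, Injective f.
Proof. exact (proj1 (proj2 (proj2 (proj2 (proj2 kappa_regular))))). Qed.

Lemma card_lt_segment b : card_lt (fun y => lt y b).
Proof. exact (proj1 (proj2 (proj2 (proj2 (proj2 (proj2 kappa_regular))))) b). Qed.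

Lemma card_lt_bounded X : card_lt X -> exists b, forall x, X x -> lt x b.
Proof. exact (proj2 (proj2 (proj2 (proj2 (proj2 (proj2 kappa_regular))))) X). Qed.

Lemma K_inhabited : inhabited K.
Proof. destruct K_infinite as [f _]. exact (inhabits (f 0)). Qed.

Lemma lt_asym x y : lt x y -> ~ lt y x.
Proof. intros Hxy Hyx. exact (lt_irrefl x (lt_trans _ _ _ Hxy Hyx)). Qed.

Lemma lt_nlt_trans x y z : lt x y -> ~ lt z y -> lt x z.
Proof.
  intros Hxy Hzy. destruct (lt_total y z) as [H|[<-|H]]; [exact (lt_trans _ _ _ Hxy H) | exact Hxy | contradiction].
Qed.

Lemma nlt_trans x y z : ~ lt y x -> ~ lt z y -> ~ lt z x.
Proof. intros Hyx Hzy Hzx. exact (Hzy (lt_nlt_trans _ _ _ Hzx Hyx)). Qed.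

Lemma nlt_cases x y : ~ lt y x -> x = y \/ lt x y.
Proof. intros H. destruct (lt_total x y) as [L|[E|L]]; auto. contradiction. Qed.

Lemma upper_bound2 x y : exists m, ~ lt m x /\ ~ lt m y.
Proof.
  destruct (lt_total x y) as [L|[<-|L]].
  - exists y. split; [exact (lt_asym _ _ L) | apply lt_irrefl].
  - exists x. split; apply lt_irrefl.
  - exists x. split; [apply lt_irrefl | exact (lt_asym _ _ L)].
Qed.

Lemma exists_minimum : exists z, forall y, ~ lt y z.
Proof.
  destruct K_inhabited as [x]. apply NNPP. intros Hno.
  induction x as [x IH] using (well_founded_ind lt_wf).
  apply Hno. exists x. intros y Hy. exact (IH y Hy).
Qed.

Lemma card_lt_sub (X Y : K -> Prop) : (forall x, X x -> Y x) -> card_lt Y -> card_lt X.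
Proof. intros HXY HY [f [Hf HfX]]. apply HY. exists f. split; auto. Qed.

Lemma card_lt_below (X : K -> Prop) b : (forall x, X x -> lt x b) -> card_lt X.
Proof. intros H. exact (card_lt_sub _ _ H (card_lt_segment b)). Qed.

Lemma card_lt_image (X : K -> Prop) (f : K -> K) :
  card_lt X -> card_lt (fun y => exists x, X x /\ y = f x).
Proof.
  intros HX [h [Hh Himg]]. apply HX.
  destruct (choice (fun k x => X x /\ h k = f x) Himg) as [pre Hpre].
  exists pre. split.
  - intros a b E. apply Hh. rewrite (proj2 (Hpre a)), (proj2 (Hpre b)), E. reflexivity.
  - intros k. exact (proj1 (Hpre k)).
Qed.

(* Some column [fun k => pi [k; j]] of K x K misses S: otherwise choosing a point of S in
   every column injects K into S. *)
Lemma card_lt_avoid (S : K -> Prop) : card_lt S -> exists h : K -> K, Injective h /\ forall k, ~ S (h k).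
Proof.
  intros HS. destruct (classic (exists j, forall k, ~ S (pi [k; j]))) as [[j Hj]|Hno].
  - exists (fun k => pi [k; j]). split; [|exact Hj].
    intros a b E. apply (proj1 pi_bijective) in E. congruence.
  - exfalso. apply HS.
    destruct (choice (fun j k => S (pi [k; j]))) as [row Hrow].
    { intros j. apply NNPP. intros Hj. apply Hno. exists j. intros k Hk. apply Hj. eauto. }
    exists (fun j => pi [row j; j]). split; [|exact Hrow].
    intros a b E. apply (proj1 pi_bijective) in E. congruence.
Qed.

Lemma lt_unbounded b : exists c, lt b c.
Proof.
  apply NNPP. intros Hno.
  destruct (card_lt_avoid _ (card_lt_segment b)) as [h [Hh Hhb]].
  destruct K_infinite as [f Hf].
  assert (Hconst : forall k, h k = b).
  { intros k. destruct (lt_total (h k) b) as [L|[E|L]]; [destruct (Hhb k L) | exact E | destruct Hno; eauto]. }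
  assert (E01 : f 0 = f 1) by (apply Hh; rewrite !Hconst; reflexivity).
  discriminate (Hf _ _ E01).
Qed.

Lemma list_bound (l : list K) : exists b, forall y, In y l -> lt y b.
Proof.
  induction l as [|a l [b Hb]].
  - destruct K_inhabited as [z]. exists z. intros y [].
  - destruct (lt_unbounded a) as [c Hc]. destruct (upper_bound2 b c) as [m [Hmb Hmc]].
    exists m. intros y [<-|Hy]; [exact (lt_nlt_trans _ _ _ Hc Hmc) | exact (lt_nlt_trans _ _ _ (Hb y Hy) Hmb)].
Qed.

Lemma extend_injective (C : K -> Prop) (p : K -> K) : card_lt C ->
  (forall i j, C i -> C j -> p i = p j -> i = j) ->
  exists q, Injective q /\ forall i, C i -> q i = p i.
Proof.
  intros HC Hp.
  destruct (card_lt_bounded _ (card_lt_image C p HC)) as [B HB].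
  destruct (card_lt_avoid _ (card_lt_segment B)) as [h [Hh HhB]].
  exists (fun i => if excluded_middle_informative (C i) then p i else h i). split.
  - intros i j. destruct (excluded_middle_informative (C i)) as [Ci|Ci];
      destruct (excluded_middle_informative (C j)) as [Cj|Cj]; intros E.
    + exact (Hp i j Ci Cj E).
    + destruct (HhB j). rewrite <- E. apply HB. eauto.
    + destruct (HhB i). rewrite E. apply HB. eauto.
    + exact (Hh i j E).
  - intros i Ci. destruct (excluded_middle_informative (C i)); [reflexivity | contradiction].
Qed.

Definition pinv (k : K) : list K := proj1_sig (constructive_indefinite_description _ (proj2 pi_bijective k)).

Lemma pi_pinv k : pi (pinv k) = k.
Proof. exact (proj2_sig (constructive_indefinite_description _ (proj2 pi_bijective k))). Qed.

Lemma pinv_pi u : pinv (pi u) = u.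
Proof. apply (proj1 pi_bijective), pi_pinv. Qed.

Definition zero : K := epsilon K_inhabited (fun z => forall y, ~ lt y z).
Definition one : K := epsilon K_inhabited (lt zero).

Lemma zero_least y : ~ lt y zero.
Proof. exact (epsilon_spec K_inhabited (fun z => forall y, ~ lt y z) exists_minimum y). Qed.

Lemma zero_lt_one : lt zero one.
Proof. exact (epsilon_spec K_inhabited (lt zero) (lt_unbounded zero)). Qed.

Lemma one_neq_zero : one <> zero.
Proof. intros E. apply (lt_irrefl zero). rewrite <- E at 2. exact zero_lt_one. Qed.

Definition injOn {A : Type} (p : K -> A) (b : K) : Prop :=
  forall i j, lt i b -> lt j b -> p i = p j -> i = j.

Record cond := Cond { cdom : K; cmap : K -> K }.

Definition good (c : cond) : Prop := injOn (cmap c) (cdom c).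
Definition agrees (g : K -> K) (c : cond) : Prop := forall i, lt i (cdom c) -> g i = cmap c i.
Definition cle (c d : cond) : Prop := ~ lt (cdom d) (cdom c) /\ agrees (cmap d) c.
Definition dense (D : cond -> Prop) : Prop := forall c, good c -> exists d, good d /\ cle c d /\ D d.
Definition meets (g : K -> K) (D : cond -> Prop) : Prop := exists c, D c /\ agrees g c.

Lemma cle_refl c : cle c c.
Proof. split; [apply lt_irrefl | intros i _; reflexivity]. Qed.

Lemma cle_trans c d e : cle c d -> cle d e -> cle c e.
Proof.
  intros [Hcd Acd] [Hde Ade]. split; [exact (nlt_trans _ _ _ Hcd Hde)|].
  intros i Hi. rewrite (Ade i (lt_nlt_trans _ _ _ Hi Hcd)). exact (Acd i Hi).
Qed.

Lemma agrees_cle g c d : agrees g d -> cle c d -> agrees g c.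
Proof.
  intros Hgd [Hcd Acd] i Hi. rewrite (Hgd i (lt_nlt_trans _ _ _ Hi Hcd)). exact (Acd i Hi).
Qed.

Lemma good_injective g b : Injective g -> good (Cond b g).
Proof. intros Hg i j _ _. apply Hg. Qed.

Lemma dense_True : dense (fun _ => True).
Proof. intros c Hc. exists c. split; [exact Hc | split; [apply cle_refl | exact I]]. Qed.

Lemma extend_domain c m : good c -> ~ lt m (cdom c) -> exists q, good (Cond m q) /\ cle c (Cond m q).
Proof.
  intros Hc Hm.
  destruct (extend_injective (fun i => lt i (cdom c)) (cmap c) (card_lt_segment _) Hc) as [q [Hq Hqc]].
  exists q. split; [apply good_injective, Hq | split; [exact Hm | exact Hqc]].
Qed.

Lemma extend_range c k : good c -> exists d, good d /\ cle c d /\ exists i, lt i (cdom d) /\ cmap d i = k.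
Proof.
  intros Hc. destruct (classic (exists i, lt i (cdom c) /\ cmap c i = k)) as [Hk|Hk].
  - exists c. split; [exact Hc | split; [apply cle_refl | exact Hk]].
  - destruct (lt_unbounded (cdom c)) as [m Hm].
    pose (p := fun i => if excluded_middle_informative (i = cdom c) then k else cmap c i).
    destruct (extend_injective (fun i => lt i (cdom c) \/ i = cdom c) p) as [q [Hq Hqp]].
    { apply (card_lt_below _ m). intros i [Hi| ->]; [exact (lt_trans _ _ _ Hi Hm) | exact Hm]. }
    { intros i j Hi Hj. unfold p.
      destruct (excluded_middle_informative (i = cdom c)) as [Ei|Ei];
        destruct (excluded_middle_informative (j = cdom c)) as [Ej|Ej]; intros E.
      - congruence.
      - destruct Hk. exists j. destruct Hj; [auto | contradiction].
      - destruct Hk. exists i. destruct Hi; [auto | contradiction].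
      - destruct Hi as [Hi|]; [|contradiction]. destruct Hj as [Hj|]; [|contradiction].
        exact (Hc i j Hi Hj E). }
    exists (Cond m q). split; [apply good_injective, Hq | split; [split; [exact (lt_asym _ _ Hm)|] |]].
    + intros i Hi. simpl. rewrite Hqp by (left; exact Hi). unfold p.
      destruct (excluded_middle_informative (i = cdom c)) as [->|_]; [destruct (lt_irrefl _ Hi) | reflexivity].
    + exists (cdom c). split; [exact Hm|]. simpl. rewrite Hqp by (right; reflexivity). unfold p.
      destruct (excluded_middle_informative (cdom c = cdom c)) as [_|N]; [reflexivity | destruct (N eq_refl)].
Qed.

Lemma extend_cover c k : good c ->
  exists d, good d /\ cle c d /\ lt k (cdom d) /\ exists i, lt i (cdom d) /\ cmap d i = k.
Proof.
  intros Hc. destruct (extend_range c k Hc) as [d [Hd [Hcd [i [Hi Hdi]]]]].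
  destruct (lt_unbounded k) as [k' Hk']. destruct (upper_bound2 (cdom d) k') as [m [Hmd Hmk]].
  destruct (extend_domain d m Hd Hmd) as [q [Hq [Hdm Hqd]]].
  exists (Cond m q). split; [exact Hq | split; [exact (cle_trans _ _ _ Hcd (conj Hdm Hqd)) | split]].
  - exact (lt_nlt_trans _ _ _ Hk' Hmk).
  - exists i. split; [exact (lt_nlt_trans _ _ _ Hi Hmd) | simpl; rewrite Hqd by exact Hi; exact Hdi].
Qed.

Lemma chain_upper_bound (I : K -> Prop) (r : K -> cond) :
  card_lt I -> (forall j, I j -> good (r j)) ->
  (forall j j', I j -> I j' -> cle (r j) (r j') \/ cle (r j') (r j)) ->
  exists u, good u /\ forall j, I j -> cle (r j) u.
Proof.
  intros HI Hgood Hcomp.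
  destruct (card_lt_bounded _ (card_lt_image I (fun j => cdom (r j)) HI)) as [B HB].
  assert (HrB : forall j, I j -> lt (cdom (r j)) B) by (intros j Hj; apply HB; eauto).
  assert (Hcoh : forall j j' i, I j -> I j' -> lt i (cdom (r j)) -> lt i (cdom (r j')) ->
                   cmap (r j) i = cmap (r j') i).
  { intros j j' i Hj Hj' Hi Hi'.
    destruct (Hcomp j j' Hj Hj') as [[_ E]|[_ E]]; [symmetry|]; apply E; assumption. }
  pose (val := fun i => epsilon K_inhabited (fun v => exists j, I j /\ lt i (cdom (r j)) /\ v = cmap (r j) i)).
  assert (Hval : forall j i, I j -> lt i (cdom (r j)) -> val i = cmap (r j) i).
  { intros j i Hj Hi. unfold val.
    destruct (epsilon_spec K_inhabited (fun v => exists j, I j /\ lt i (cdom (r j)) /\ v = cmap (r j) i))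
      as [j' [Hj' [Hi' ->]]]; [eauto | apply Hcoh; assumption]. }
  destruct (extend_injective (fun i => exists j, I j /\ lt i (cdom (r j))) val) as [q [Hq Hqv]].
  - apply (card_lt_below _ B). intros i [j [Hj Hi]]. exact (lt_trans _ _ _ Hi (HrB j Hj)).
  - intros i i' [j [Hj Hi]] [j' [Hj' Hi']]. rewrite (Hval j i Hj Hi), (Hval j' i' Hj' Hi'). intros E.
    destruct (Hcomp j j' Hj Hj') as [[Hle A]|[Hle A]].
    + rewrite <- (A i Hi) in E. exact (Hgood j' Hj' i i' (lt_nlt_trans _ _ _ Hi Hle) Hi' E).
    + rewrite <- (A i' Hi') in E. exact (Hgood j Hj i i' Hi (lt_nlt_trans _ _ _ Hi' Hle) E).
  - exists (Cond B q). split; [apply good_injective, Hq|].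
    intros j Hj. split; [exact (lt_asym _ _ (HrB j Hj))|].
    intros i Hi. simpl. rewrite Hqv by eauto. exact (Hval j i Hj Hi).
Qed.

Section Generic.

Variable D : K -> cond -> Prop.
Hypothesis D_dense : forall k, dense (D k).
Variable c0 : cond.
Hypothesis c0_good : good c0.

Definition chain_below (k : K) (prev : K -> cond) : Prop :=
  forall j, lt j k -> good (prev j) /\ cle c0 (prev j) /\ forall j', lt j' j -> cle (prev j') (prev j).

Definition stage_spec (k : K) (prev : K -> cond) (c : cond) : Prop :=
  good c /\ cle c0 c /\ (forall j, lt j k -> cle (prev j) c) /\
  (exists d, D k d /\ cle d c) /\ lt k (cdom c) /\ exists i, lt i (cdom c) /\ cmap c i = k.

Lemma stage_spec_exists k prev : chain_below k prev -> exists c, stage_spec k prev c.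
Proof.
  intros Hchain.
  pose (r := fun j => if excluded_middle_informative (lt j k) then prev j else c0).
  assert (Hr : forall j, lt j k -> r j = prev j).
  { intros j Hj. unfold r. destruct (excluded_middle_informative (lt j k)); [reflexivity | contradiction]. }
  assert (Hrk : r k = c0).
  { unfold r. destruct (excluded_middle_informative (lt k k)) as [L|_]; [destruct (lt_irrefl _ L) | reflexivity]. }
  (* index [k] carries [c0], so that the upper bound extends [c0] as well *)
  destruct (chain_upper_bound (fun j => lt j k \/ j = k) r) as [u [Hu Hru]].
  - destruct (lt_unbounded k) as [k' Hk'].
    apply (card_lt_below _ k'). intros j [Hj| ->]; [exact (lt_trans _ _ _ Hj Hk') | exact Hk'].
  - intros j [Hj| ->]; [rewrite Hr by exact Hj; apply Hchain, Hj | rewrite Hrk; exact c0_good].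
  - intros j j' [Hj| ->] [Hj'| ->]; rewrite ?Hrk, ?Hr by assumption.
    + destruct (lt_total j j') as [L|[<-|L]].
      * left. exact (proj2 (proj2 (Hchain j' Hj')) j L).
      * left. apply cle_refl.
      * right. exact (proj2 (proj2 (Hchain j Hj)) j' L).
    + right. exact (proj1 (proj2 (Hchain j Hj))).
    + left. exact (proj1 (proj2 (Hchain j' Hj'))).
    + left. apply cle_refl.
  - destruct (D_dense k u Hu) as [d [Hd [Hud HDd]]].
    destruct (extend_cover d k Hd) as [c [Hc [Hdc Hcover]]].
    assert (Huc : cle u c) by exact (cle_trans _ _ _ Hud Hdc).
    exists c. split; [exact Hc|]. split; [|split; [|split; [eauto | exact Hcover]]].
    + rewrite <- Hrk. exact (cle_trans _ _ _ (Hru k (or_intror eq_refl)) Huc).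
    + intros j Hj. rewrite <- (Hr j Hj). exact (cle_trans _ _ _ (Hru j (or_introl Hj)) Huc).
Qed.

Definition stage : K -> cond :=
  Fix lt_wf (fun _ => cond) (fun k rec =>
    epsilon (inhabits c0) (stage_spec k (fun j =>
      match excluded_middle_informative (lt j k) with left h => rec j h | right _ => c0 end))).

Lemma stage_eq k :
  stage k = epsilon (inhabits c0)
              (stage_spec k (fun j => if excluded_middle_informative (lt j k) then stage j else c0)).
Proof.
  unfold stage at 1. rewrite Fix_eq; [reflexivity|].
  intros k' f g Hfg. do 2 f_equal. apply functional_extensionality. intros j.
  destruct (excluded_middle_informative (lt j k')); [apply Hfg | reflexivity].
Qed.

Lemma stage_ok k : stage_spec k stage (stage k).
Proof.
  induction k as [k IH] using (well_founded_ind lt_wf).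
  pose (prev := fun j => if excluded_middle_informative (lt j k) then stage j else c0).
  assert (Hprev : forall j, lt j k -> prev j = stage j).
  { intros j Hj. unfold prev. destruct (excluded_middle_informative (lt j k)); [reflexivity | contradiction]. }
  assert (Hchain : chain_below k prev).
  { intros j Hj. rewrite Hprev by exact Hj. destruct (IH j Hj) as [Hg [Hc0 [Hbelow _]]].
    split; [exact Hg | split; [exact Hc0|]]. intros j' Hj'. rewrite Hprev by exact (lt_trans _ _ _ Hj' Hj).
    exact (Hbelow j' Hj'). }
  rewrite stage_eq. fold prev.
  destruct (epsilon_spec (inhabits c0) _ (stage_spec_exists k prev Hchain)) as [Hg [Hc0 [Hbelow Hrest]]].
  split; [exact Hg | split; [exact Hc0 | split; [|exact Hrest]]].
  intros j Hj. rewrite <- (Hprev j Hj). exact (Hbelow j Hj).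
Qed.

Lemma stage_mono j k : ~ lt k j -> cle (stage j) (stage k).
Proof.
  intros H. destruct (nlt_cases _ _ H) as [<-|L]; [apply cle_refl | exact (proj1 (proj2 (proj2 (stage_ok k))) j L)].
Qed.

Definition generic (i : K) : K := cmap (stage i) i.

Lemma generic_agrees k : agrees generic (stage k).
Proof.
  intros i Hi. unfold generic. destruct (lt_total i k) as [L|[<-|L]]; [| reflexivity |].
  - symmetry. apply (proj2 (stage_mono i k (lt_asym _ _ L))). apply stage_ok.
  - apply (proj2 (stage_mono k i (lt_asym _ _ L))). exact Hi.
Qed.

Lemma generic_spec : Injective generic /\ Surjective generic /\ agrees generic c0 /\ forall k, meets generic (D k).
Proof.
  assert (Hdom : forall i, lt i (cdom (stage i))) by (intros i; apply stage_ok).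
  split; [|split; [|split]].
  - intros a b E. destruct (upper_bound2 a b) as [m [Hma Hmb]].
    pose proof (proj1 (stage_mono a m Hma)) as Ha. pose proof (proj1 (stage_mono b m Hmb)) as Hb.
    apply (proj1 (stage_ok m)); [exact (lt_nlt_trans _ _ _ (Hdom a) Ha) | exact (lt_nlt_trans _ _ _ (Hdom b) Hb)|].
    rewrite <- !generic_agrees by eauto using lt_nlt_trans. exact E.
  - intros y. destruct (stage_ok y) as [_ [_ [_ [_ [_ [i [Hi Hy]]]]]]].
    exists i. rewrite generic_agrees by exact Hi. exact Hy.
  - intros i Hi. exact (agrees_cle _ _ _ (generic_agrees i) (proj1 (proj2 (stage_ok i))) i Hi).
  - intros k. destruct (stage_ok k) as [_ [_ [_ [[d [Hd Hdk]] _]]]].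
    exists d. split; [exact Hd | exact (agrees_cle _ _ _ (generic_agrees k) Hdk)].
Qed.

End Generic.

Lemma generic_exists (D : K -> cond -> Prop) (c0 : cond) : (forall k, dense (D k)) -> good c0 ->
  exists g, Injective g /\ Surjective g /\ agrees g c0 /\ forall k, meets g (D k).
Proof. intros HD Hc0. exists (generic D c0). exact (generic_spec D HD c0 Hc0). Qed.

Lemma dense_pairing (D : K -> K -> cond -> Prop) : (forall k i, dense (D k i)) ->
  exists D' : K -> cond -> Prop, (forall j, dense (D' j)) /\
    forall g, (forall j, meets g (D' j)) -> forall k i, meets g (D k i).
Proof.
  intros HD. exists (fun j => match pinv j with [k; i] => D k i | _ => fun _ => True end). split.
  - intros j. destruct (pinv j) as [|k [|i [|]]]; auto using dense_True.
  - intros g Hg k i. specialize (Hg (pi [k; i])). rewrite pinv_pi in Hg. exact Hg.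
Qed.

Variable ar : nat -> nat.

Definition Mx (x : K -> K) : Lstr := M_code lt ar pi x.

Lemma is_nth_le m m' k : is_nth lt m k -> is_nth lt m' k -> m' <= m.
Proof.
  intros [f [Hf Hfk]] [f' [Hf' Hf'k]].
  rewrite <- (length_seq m' 0), <- (length_map f'), <- (length_seq m 0), <- (length_map f).
  apply NoDup_incl_length.
  - apply NoDup_map_NoDup_ForallPairs; [|apply seq_NoDup].
    intros a b Ha Hb. apply in_seq in Ha. apply in_seq in Hb. apply Hf'; lia.
  - intros y Hy. apply in_map_iff in Hy as [i [<- Hi]]. apply in_seq in Hi.
    destruct (proj1 (Hfk (f' i)) (proj2 (Hf'k (f' i)) (ex_intro _ i (conj (proj2 Hi) eq_refl))))
      as [j [Hj Ej]].
    apply in_map_iff. exists j. split; [exact Ej | apply in_seq; lia].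
Qed.

Lemma is_nth_unique m m' k : is_nth lt m k -> is_nth lt m' k -> m = m'.
Proof. intros H H'. pose proof (is_nth_le _ _ _ H H'). pose proof (is_nth_le _ _ _ H' H). lia. Qed.

Definition arity_index (k : K) (s : list K) : nat :=
  epsilon (inhabits 0) (fun m => is_nth lt m k /\ length s = ar m).

(* Junk unless [c = pi (k :: s)] with [k] the finite ordinal [m] and [length s = ar m];
   [pullback_rel] only looks at such [c]. *)
Definition atom (c : K) : iform K :=
  match pinv c with k :: s => IRel (arity_index k s) s | [] => IFalse end.

Lemma sat_atom (M : Lstr) (g : K -> dom M) m k s : is_nth lt m k -> length s = ar m ->
  (isat ar M g (atom (pi (k :: s))) <-> rel M m (map g s)).
Proof.
  intros Hk Hs. unfold atom. rewrite pinv_pi.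
  assert (Hm : arity_index k s = m).
  { unfold arity_index.
    destruct (epsilon_spec (inhabits 0) (fun m => is_nth lt m k /\ length s = ar m)) as [Hk' _];
      [eauto | exact (is_nth_unique _ _ _ Hk' Hk)]. }
  simpl. rewrite Hm. tauto.
Qed.

Lemma free_atom c v : ifree (atom c) v -> In v (pinv c).
Proof. unfold atom. destruct (pinv c) as [|k s]; [apply free_IFalse | intros Hv; right; exact Hv]. Qed.

Definition pullback (g x : K -> K) : K -> K :=
  fun c => if excluded_middle_informative (isat ar (Mx x) g (atom c)) then one else zero.

Lemma pullback_rel g x m s : rel (Mx (pullback g x)) m s <-> rel (Mx x) m (map g s).
Proof.
  simpl. unfold pullback. split.
  - intros [Hs [k [Hk Hnz]]].
    destruct (excluded_middle_informative (isat ar (Mx x) g (atom (pi (k :: s))))) as [A|_];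
      [| destruct (Hnz zero_least)].
    exact (proj1 (sat_atom (Mx x) g m k s Hk Hs) A).
  - intros Hrel. pose proof Hrel as [Hs [k [Hk _]]]. rewrite length_map in Hs.
    split; [exact Hs|]. exists k. split; [exact Hk|].
    destruct (excluded_middle_informative (isat ar (Mx x) g (atom (pi (k :: s))))) as [_|A].
    + intros Hzero. exact (Hzero zero zero_lt_one).
    + destruct A. exact (proj2 (sat_atom (Mx x) g m k s Hk Hs) Hrel).
Qed.

Lemma iso_pullback g x : Injective g -> Surjective g -> iso ar (Mx (pullback g x)) (Mx x).
Proof.
  intros Hinj Hsurj. destruct (choice (fun y v => g v = y) Hsurj) as [g' Hg'].
  exists g. split.
  - exists g'. split; [intros v; apply Hinj, Hg' | exact Hg'].
  - intros m s _. apply pullback_rel.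
Qed.

Definition IAnd2 (p q : iform K) : iform K :=
  IAnd (fun _ => True) (fun k => if excluded_middle_informative (k = zero) then p else q).

Lemma sat_IAnd2 (M : Lstr) (s : K -> dom M) p q :
  isat ar M s (IAnd2 p q) <-> isat ar M s p /\ isat ar M s q.
Proof.
  simpl. split.
  - intros H. split.
    + generalize (H zero I). destruct (excluded_middle_informative (zero = zero)) as [_|N]; [auto | destruct (N eq_refl)].
    + generalize (H one I). destruct (excluded_middle_informative (one = zero)) as [E|_]; [destruct (one_neq_zero E) | auto].
  - intros [Hp Hq] k _. destruct (excluded_middle_informative (k = zero)); assumption.
Qed.

Lemma free_IAnd2 p q v : ifree (IAnd2 p q) v -> ifree p v \/ ifree q v.
Proof. simpl. intros [k [_ Hv]]. destruct (excluded_middle_informative (k = zero)); auto. Qed.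

Definition distinct (b : K) : iform K :=
  IAnd (fun c => exists i j, c = pi [i; j] /\ lt i b /\ lt j b /\ i <> j)
       (fun c => INeg (IEq (nth 0 (pinv c) zero) (nth 1 (pinv c) zero))).

Lemma sat_distinct (M : Lstr) (s : K -> dom M) b : isat ar M s (distinct b) <-> injOn s b.
Proof.
  simpl. split.
  - intros H i j Hi Hj E. apply NNPP. intros Hij.
    apply (H (pi [i; j])); [exists i, j; auto|]. rewrite pinv_pi. exact E.
  - intros H c [i [j [-> [Hi [Hj Hij]]]]]. rewrite pinv_pi. simpl. intros E. exact (Hij (H i j Hi Hj E)).
Qed.

Lemma free_distinct b v : ifree (distinct b) v -> lt v b.
Proof.
  simpl. intros [c [[i [j [-> [Hi [Hj _]]]]] Hv]]. rewrite pinv_pi in Hv. simpl in Hv.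
  destruct Hv as [->| ->]; assumption.
Qed.

Definition interval (b c : K) : K -> Prop := fun v => ~ lt v b /\ lt v c.

Lemma interval_out b c v : ~ interval b c v -> lt v c -> lt v b.
Proof. intros Hv Hvc. apply NNPP. intros Hvb. exact (Hv (conj Hvb Hvc)). Qed.

Definition ext_exists (b c : K) (q : iform K) : iform K := IEx (interval b c) (IAnd2 (distinct c) q).

Lemma sat_ext_exists x b c (p : K -> K) q : ~ lt c b -> (forall v, ifree q v -> lt v c) ->
  (isat ar (Mx x) p (ext_exists b c q) <->
   exists s, good (Cond c s) /\ cle (Cond b p) (Cond c s) /\ isat ar (Mx x) s q).
Proof.
  intros Hbc Hq. unfold ext_exists. cbn [isat]. split.
  - intros [s [Hs Hsat]]. apply sat_IAnd2 in Hsat as [Hinj Hsat]. apply sat_distinct in Hinj.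
    exists s. split; [exact Hinj | split; [split; [exact Hbc|] | exact Hsat]].
    intros i Hi. apply Hs. intros [Hi' _]. exact (Hi' Hi).
  - intros [s [Hinj [[_ Hsp] Hsat]]].
    exists (fun v => if excluded_middle_informative (lt v c) then s v else p v). split; [|apply sat_IAnd2; split].
    + intros v Hv. destruct (excluded_middle_informative (lt v c)) as [L|_]; [|reflexivity].
      exact (Hsp v (interval_out _ _ _ Hv L)).
    + apply sat_distinct. intros i j Hi Hj.
      destruct (excluded_middle_informative (lt i c)); destruct (excluded_middle_informative (lt j c)); try contradiction.
      apply Hinj; assumption.
    + apply (isat_agree ar (Mx x) q s); [|exact Hsat]. intros v Hv.
      destruct (excluded_middle_informative (lt v c)) as [_|N]; [reflexivity | destruct (N (Hq v Hv))].
Qed.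

Lemma free_ext_exists b c q v : (forall v, ifree q v -> lt v c) -> ifree (ext_exists b c q) v -> lt v b.
Proof.
  intros Hq [Hv Hf]. apply (interval_out b c v Hv).
  destruct (free_IAnd2 _ _ _ Hf) as [Hd|Hd]; [exact (free_distinct _ _ Hd) | exact (Hq v Hd)].
Qed.

Lemma wf_ext_exists b c q : iwf q -> iwf (ext_exists b c q).
Proof.
  intros Hq. split; [apply (card_lt_below _ c); intros v [_ Hv]; exact Hv|].
  simpl. intros k _. destruct (excluded_middle_informative (k = zero)); [simpl; auto | exact Hq].
Qed.

Lemma rk_ext_exists b c q a : rk_le q a -> rk_le (ext_exists b c q) (OS a).
Proof.
  intros Hq. exists a. split; [apply olt_OS|].
  simpl. intros k _. destruct (excluded_middle_informative (k = zero)); [simpl; auto | exact Hq].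
Qed.

Definition holds_at (x : K -> K) (phi : K -> iform K) (c : cond) : Prop :=
  isat ar (Mx x) (cmap c) (phi (cdom c)).

Definition scoped (phi : K -> iform K) : Prop := forall b v, ifree (phi b) v -> lt v b.

Definition persistent (x : K -> K) (phi : K -> iform K) : Prop :=
  forall c d, good d -> cle c d -> holds_at x phi c -> holds_at x phi d.

Definition generically_decides (S : (K -> K) -> Prop) (x : K -> K) (phi : K -> iform K) : Prop :=
  exists D : K -> cond -> Prop, (forall k, dense (D k)) /\
    forall g, Injective g -> Surjective g -> (forall k, meets g (D k)) ->
      (S (pullback g x) <-> exists b, holds_at x phi (Cond b g)).

Record vaught_transform (S : (K -> K) -> Prop) (phi : K -> iform K) (a : ord K) : Prop := {
  vt_scoped : scoped phi;
  vt_wf : forall b, iwf (phi b);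
  vt_rank : forall b, rk_le (phi b) a;
  vt_persistent : forall x, persistent x phi;
  vt_decides : forall x, generically_decides S x phi }.

Lemma holds_at_agrees x phi c g : scoped phi -> agrees g c ->
  (holds_at x phi (Cond (cdom c) g) <-> holds_at x phi c).
Proof.
  intros Hphi Hg. unfold holds_at. simpl.
  split; apply isat_agree; intros v Hv; [|symmetry]; exact (Hg v (Hphi _ v Hv)).
Qed.

Lemma vaught_transform_ext S T phi a :
  vaught_transform S phi a -> (forall z, S z <-> T z) -> vaught_transform T phi a.
Proof.
  intros [Hsc Hwf Hrk Hpers Hdec] E. split; auto.
  intros x. destruct (Hdec x) as [D [HD Hgen]]. exists D. split; [exact HD|].
  intros g Hinj Hsurj Hg. rewrite <- E. exact (Hgen g Hinj Hsurj Hg).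
Qed.

Lemma vaught_transform_empty : exists phi a, vaught_transform (fun _ => False) phi a.
Proof.
  exists (fun _ => IFalse), O0. split.
  - intros b v Hv. destruct (free_IFalse v Hv).
  - intros b. simpl. tauto.
  - intros b. simpl. tauto.
  - intros x c d _ _ H. destruct (sat_IFalse ar _ _ H).
  - intros x. exists (fun _ => fun _ => True). split; [intros; apply dense_True|].
    intros g _ _ _. split; [intros [] | intros [b H]; destruct (sat_IFalse ar _ _ H)].
Qed.

Definition value_formula (e0 : K -> K) (c : K) : iform K :=
  if excluded_middle_informative (e0 c = one) then atom c
  else if excluded_middle_informative (e0 c = zero) then INeg (atom c) else IFalse.

Lemma sat_value_formula x g e0 c : isat ar (Mx x) g (value_formula e0 c) <-> pullback g x c = e0 c.
Proof.
  pose proof one_neq_zero. unfold value_formula, pullback.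
  destruct (excluded_middle_informative (isat ar (Mx x) g (atom c))) as [A|A];
    destruct (excluded_middle_informative (e0 c = one)) as [E1|E1];
    try destruct (excluded_middle_informative (e0 c = zero)) as [E0|E0];
    split; intros H'; try solve [congruence | tauto | destruct (sat_IFalse ar _ _ H') | exact (fun N => N A) | destruct (H' A)].
Qed.

Lemma free_value_formula e0 c v : ifree (value_formula e0 c) v -> In v (pinv c).
Proof.
  unfold value_formula. destruct (excluded_middle_informative (e0 c = one)); [apply free_atom|].
  destruct (excluded_middle_informative (e0 c = zero)); [apply free_atom | intros Hv; destruct (free_IFalse v Hv)].
Qed.

Lemma wf_value_formula e0 c : iwf (value_formula e0 c).
Proof.
  unfold value_formula, atom. destruct (pinv c);
    repeat destruct (excluded_middle_informative _); simpl; tauto.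
Qed.

Lemma rk_value_formula e0 c a : rk_le (value_formula e0 c) a.
Proof.
  unfold value_formula, atom. destruct (pinv c);
    repeat destruct (excluded_middle_informative _); simpl; tauto.
Qed.

Lemma vaught_transform_basic (X : K -> Prop) (e0 : K -> K) : card_lt X ->
  exists phi a, vaught_transform (fun z => forall c, X c -> z c = e0 c) phi a.
Proof.
  intros HX. destruct (choice (fun l b => forall y, In y l -> lt y b) list_bound) as [lb Hlb].
  destruct (card_lt_bounded _ (card_lt_image X (fun c => lb (pinv c)) HX)) as [gam Hgam].
  assert (Hfree : forall c v, X c -> ifree (value_formula e0 c) v -> lt v gam).
  { intros c v Hc Hv. apply lt_trans with (lb (pinv c)); [exact (Hlb _ v (free_value_formula _ _ _ Hv))|].
    apply Hgam. eauto. }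
  exists (fun b => if excluded_middle_informative (lt b gam) then IFalse else IAnd X (value_formula e0)), O0.
  split.
  - intros b v. destruct (excluded_middle_informative (lt b gam)) as [_|L]; [intros Hv; destruct (free_IFalse v Hv)|].
    intros [c [Hc Hv]]. exact (lt_nlt_trans _ _ _ (Hfree c v Hc Hv) L).
  - intros b. destruct (excluded_middle_informative (lt b gam)); simpl; [tauto|].
    intros c _. apply wf_value_formula.
  - intros b. destruct (excluded_middle_informative (lt b gam)); simpl; [tauto|].
    intros c _. apply rk_value_formula.
  - intros x c d _ [Hcd Hdc]. unfold holds_at.
    destruct (excluded_middle_informative (lt (cdom c) gam)) as [_|Lc]; [intros H; destruct (sat_IFalse ar _ _ H)|].
    destruct (excluded_middle_informative (lt (cdom d) gam)) as [Ld|_]; [destruct (nlt_trans _ _ _ Lc Hcd Ld)|].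
    apply isat_agree. intros v [c' [Hc' Hv]]. symmetry. apply Hdc.
    exact (lt_nlt_trans _ _ _ (Hfree c' v Hc' Hv) Lc).
  - intros x. exists (fun _ => fun _ => True). split; [intros; apply dense_True|].
    intros g _ _ _. unfold holds_at. simpl. split.
    + intros H. exists gam. destruct (excluded_middle_informative (lt gam gam)) as [L|_]; [destruct (lt_irrefl _ L)|].
      intros c Hc. apply sat_value_formula, H, Hc.
    + intros [b Hb] c Hc. destruct (excluded_middle_informative (lt b gam)); [destruct (sat_IFalse ar _ _ Hb)|].
      apply sat_value_formula, Hb, Hc.
Qed.

Definition neg_transform (phi : K -> iform K) (b : K) : iform K :=
  IAnd (fun c => ~ lt c b) (fun c => INeg (ext_exists b c (phi c))).

Lemma holds_at_neg_transform x phi c : scoped phi ->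
  (holds_at x (neg_transform phi) c <-> forall d, good d -> cle c d -> ~ holds_at x phi d).
Proof.
  intros Hphi. destruct c as [b p]. unfold holds_at, neg_transform. cbn [isat cdom cmap]. split.
  - intros H [c s] Hd Hcd Hs. apply (H c (proj1 Hcd)).
    apply sat_ext_exists; [exact (proj1 Hcd) | apply Hphi | eauto].
  - intros H c Hc Hex. apply sat_ext_exists in Hex as [s [Hs [Hcs Hsat]]]; [| exact Hc | apply Hphi].
    exact (H (Cond c s) Hs Hcs Hsat).
Qed.

Lemma scoped_neg_transform phi : scoped phi -> scoped (neg_transform phi).
Proof. intros Hsc b v [c [_ Hv]]. exact (free_ext_exists _ _ _ v (Hsc c) Hv). Qed.

Lemma dense_decided x phi : scoped phi ->
  dense (fun c => holds_at x phi c \/ holds_at x (neg_transform phi) c).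
Proof.
  intros Hsc c Hc. destruct (classic (exists d, good d /\ cle c d /\ holds_at x phi d)) as [[d Hd]|Hno].
  - exists d. tauto.
  - exists c. split; [exact Hc | split; [apply cle_refl | right]].
    apply holds_at_neg_transform; [exact Hsc|]. intros d Hd Hcd Hphi. apply Hno. eauto.
Qed.

Lemma generically_decides_compl S x phi : scoped phi -> persistent x phi ->
  generically_decides S x phi -> generically_decides (fun z => ~ S z) x (neg_transform phi).
Proof.
  intros Hsc Hpers [D [HD Hgen]].
  destruct (dense_pairing (fun k i => if excluded_middle_informative (k = zero)
                                        then fun c => holds_at x phi c \/ holds_at x (neg_transform phi) c
                                        else D i)) as [D' [HD' Hmeet]].
  { intros k i. destruct (excluded_middle_informative (k = zero)); [apply dense_decided, Hsc | apply HD]. }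
  exists D'. split; [exact HD'|]. intros g Hinj Hsurj Hg.
  assert (HgD : forall i, meets g (D i)).
  { intros i. generalize (Hmeet g Hg one i).
    destruct (excluded_middle_informative (one = zero)) as [E|_]; [destruct (one_neq_zero E) | auto]. }
  rewrite (Hgen g Hinj Hsurj HgD). split.
  - intros Hno. generalize (Hmeet g Hg zero zero).
    destruct (excluded_middle_informative (zero = zero)) as [_|N]; [|destruct (N eq_refl)].
    intros [c [[Hc|Hc] Hgc]].
    + destruct Hno. exists (cdom c). apply holds_at_agrees; assumption.
    + exists (cdom c). apply holds_at_agrees; [apply scoped_neg_transform|..]; assumption.
  - intros [b Hb] [b' Hb']. destruct (upper_bound2 b b') as [m [Hmb Hmb']].
    apply (proj1 (holds_at_neg_transform x phi _ Hsc) Hb (Cond m g));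
      [apply good_injective, Hinj | split; [exact Hmb | intros i _; reflexivity]|].
    apply (Hpers (Cond b' g)); [apply good_injective, Hinj | | exact Hb'].
    split; [exact Hmb' | intros i _; reflexivity].
Qed.

Lemma vaught_transform_compl S phi a :
  vaught_transform S phi a -> vaught_transform (fun z => ~ S z) (neg_transform phi) (OS a).
Proof.
  intros [Hsc Hwf Hrk Hpers Hdec]. split.
  - exact (scoped_neg_transform phi Hsc).
  - intros b c _. apply wf_ext_exists, Hwf.
  - intros b c _. apply rk_ext_exists, Hrk.
  - intros x c d Hd Hcd. rewrite !holds_at_neg_transform by exact Hsc.
    intros H e He Hde. exact (H e He (cle_trans _ _ _ Hcd Hde)).
  - intros x. exact (generically_decides_compl S x phi Hsc (Hpers x) (Hdec x)).
Qed.

Lemma vaught_transform_union (F : K -> (K -> K) -> Prop) :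
  (forall k, exists phi a, vaught_transform (F k) phi a) ->
  exists phi a, vaught_transform (fun z => exists k, F k z) phi a.
Proof.
  intros HF.
  destruct (choice (fun k (pa : (K -> iform K) * ord K) => vaught_transform (F k) (fst pa) (snd pa)))
    as [f Hf].
  { intros k. destruct (HF k) as [phi [a H]]. exists (phi, a). exact H. }
  exists (fun b => IOr (fun _ => True) (fun k => fst (f k) b)), (Olim (fun k => snd (f k))). split.
  - intros b v [k [_ Hv]]. exact (vt_scoped _ _ _ (Hf k) b v Hv).
  - intros b k _. apply (vt_wf _ _ _ (Hf k)).
  - intros b k _. apply rk_le_ole with (snd (f k)); [apply (vt_rank _ _ _ (Hf k)) | apply ole_Olim with k, ole_refl].
  - intros x c d Hd Hcd. unfold holds_at. rewrite !sat_IOr. intros [k [_ Hk]].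
    exists k. split; [exact I | exact (vt_persistent _ _ _ (Hf k) x c d Hd Hcd Hk)].
  - intros x.
    destruct (choice (fun k (D : K -> cond -> Prop) => (forall i, dense (D i)) /\
      forall g, Injective g -> Surjective g -> (forall i, meets g (D i)) ->
        (F k (pullback g x) <-> exists b, holds_at x (fst (f k)) (Cond b g)))) as [DD HDD].
    { intros k. exact (vt_decides _ _ _ (Hf k) x). }
    destruct (dense_pairing DD) as [D [HD Hmeet]]; [intros k; apply HDD|].
    exists D. split; [exact HD|]. intros g Hinj Hsurj Hg. unfold holds_at. simpl. split.
    + intros [k Hk]. apply (proj2 (HDD k) g Hinj Hsurj (Hmeet g Hg k)) in Hk as [b Hb].
      exists b. apply sat_IOr. exists k. split; [exact I | exact Hb].
    + intros [b Hb]. apply sat_IOr in Hb as [k [_ Hb]].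
      exists k. apply (proj2 (HDD k) g Hinj Hsurj (Hmeet g Hg k)). exists b. exact Hb.
Qed.

Lemma kBorel_vaught_transform S : kBorel S -> exists phi a, vaught_transform S phi a.
Proof.
  induction 1 as [| X e0 HX | S _ [phi [a H]] | F _ IH | F _ IH | S T _ [phi [a H]] E].
  - exact vaught_transform_empty.
  - exact (vaught_transform_basic X e0 HX).
  - exists (neg_transform phi), (OS a). exact (vaught_transform_compl _ _ _ H).
  - exact (vaught_transform_union F IH).
  - destruct (vaught_transform_union (fun k z => ~ F k z)) as [phi [a H]].
    { intros k. destruct (IH k) as [phi [a H]]. exists (neg_transform phi), (OS a). exact (vaught_transform_compl _ _ _ H). }
    exists (neg_transform phi), (OS a). apply (vaught_transform_ext _ _ _ _ (vaught_transform_compl _ _ _ H)).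
    intros z. split; [intros Hz k; apply NNPP; intros Hk; apply Hz; eauto | intros Hz [k Hk]; exact (Hk (Hz k))].
  - exists phi, a. exact (vaught_transform_ext _ _ _ _ H E).
Qed.

Definition vaught_sentence (phi : K -> iform K) : iform K :=
  IOr (fun _ => True) (fun b => ext_exists zero b (phi b)).

Lemma sat_vaught_sentence x (s : K -> K) phi : scoped phi ->
  (isat ar (Mx x) s (vaught_sentence phi) <-> exists c, good c /\ holds_at x phi c).
Proof.
  intros Hphi. unfold vaught_sentence. rewrite sat_IOr. split.
  - intros [b [_ Hb]]. apply sat_ext_exists in Hb as [t [Ht [_ Hb]]]; [| apply zero_least | apply Hphi].
    exists (Cond b t). split; assumption.
  - intros [[b t] [Ht Hb]]. exists b. split; [exact I|].
    apply sat_ext_exists; [apply zero_least | apply Hphi|].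
    exists t. split; [exact Ht | split; [split; [apply zero_least | intros i Hi; destruct (zero_least i Hi)] | exact Hb]].
Qed.

Lemma vaught_sentence_isentence phi : scoped phi -> (forall b, iwf (phi b)) -> isentence (vaught_sentence phi).
Proof.
  intros Hsc Hwf. split.
  - intros b _. apply wf_ext_exists, Hwf.
  - intros v [b [_ Hv]]. exact (zero_least v (free_ext_exists _ _ _ v (Hsc b) Hv)).
Qed.

Lemma rk_vaught_sentence phi a : (forall b, rk_le (phi b) a) -> rk_le (vaught_sentence phi) (OS a).
Proof. intros Hrk b _. apply rk_ext_exists, Hrk. Qed.

Lemma kBorel_invariant_definable (S : (K -> K) -> Prop) : kBorel S ->
  (forall x y, iso ar (Mx x) (Mx y) -> S x -> S y) ->
  exists psi a, isentence psi /\ rk_le psi a /\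
    forall x, (forall s : K -> K, isat ar (Mx x) s psi) <-> S x.
Proof.
  intros HS Hinv. destruct (kBorel_vaught_transform S HS) as [phi [a [Hsc Hwf Hrk _ Hdec]]].
  exists (vaught_sentence phi), (OS a).
  split; [exact (vaught_sentence_isentence phi Hsc Hwf) | split; [exact (rk_vaught_sentence phi a Hrk)|]].
  intros x. destruct (Hdec x) as [D [HD Hgen]]. split.
  - intros Hpsi. apply (sat_vaught_sentence x (fun v => v) phi Hsc) in Hpsi as [c [Hc Hphi]].
    destruct (generic_exists D c HD Hc) as [g [Hinj [Hsurj [Hgc Hg]]]].
    apply (Hinv (pullback g x)); [exact (iso_pullback g x Hinj Hsurj)|].
    apply (Hgen g Hinj Hsurj Hg). exists (cdom c). apply holds_at_agrees; assumption.
  - intros Hx s. apply sat_vaught_sentence; [exact Hsc|].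
    destruct (generic_exists D (Cond zero (fun v => v)) HD) as [g [Hinj [Hsurj [_ Hg]]]].
    { intros i j Hi. destruct (zero_least i Hi). }
    assert (Hgx : S (pullback g x)) by exact (Hinv x _ (iso_sym _ _ _ (iso_pullback g x Hinj Hsurj)) Hx).
    apply (Hgen g Hinj Hsurj Hg) in Hgx as [b Hb].
    exists (Cond b g). split; [exact (good_injective g b Hinj) | exact Hb].
Qed.

End Kappa.

Theorem theorem4p5 (K : Type) (lt : K -> K -> Prop)
  (Hkappa : regular_cardinal K lt)
  (ar : nat -> nat)
  (pi : list K -> K)
  (Hpi : (forall u v, pi u = pi v -> u = v) /\ (forall k, exists u, pi u = k))
  (T : fo -> Prop) (HT : complete_theory ar T)
  (eta : K -> K) (Heta : fo_models ar (M_code lt ar pi eta) T)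
  (Hclose : forall a : ord K, exists xi : K -> K,
      fo_models ar (M_code lt ar pi xi) T /\
      ~ iso ar (M_code lt ar pi xi) (M_code lt ar pi eta) /\
      equiv_rank ar a (M_code lt ar pi xi) (M_code lt ar pi eta)) :
  ~ kBorel (fun zeta : K -> K => iso ar (M_code lt ar pi zeta) (M_code lt ar pi eta)).
Proof.
  intros Horbit.
  destruct (kBorel_invariant_definable K lt Hkappa pi Hpi ar _ Horbit) as [psi [a [Hpsi [Hrk Hdef]]]].
  { intros x y Hxy Hx. exact (iso_trans _ _ _ _ (iso_sym _ _ _ Hxy) Hx). }
  destruct (Hclose a) as [xi [_ [Hxi Hequiv]]].
  apply Hxi, Hdef, (Hequiv psi Hpsi Hrk), Hdef, iso_refl.
Qed.
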